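(* Let $(X,\|\cdot\|)$ be a normed linear space, let $I$ be a non-trivial admissible ideal in $\mathbb{N}$, let $r\ge 0$, let $x=\{x_k\}_{k\in\mathbb{N}}$ be a sequence in $X$ and let $c\in\Lambda_x^S(I)$. Then $\|\xi-c\|\le r$ for all $\xi\in I\text{-}st\text{-}\mathrm{LIM}_x^r$.
   Context: An ideal $I$ in $\mathbb{N}$ is a family of subsets of $\mathbb{N}$ containing $\emptyset$, closed under finite unions and under taking subsets; it is non-trivial if $\mathbb{N}\notin I$ and admissible if $\{n\}\in I$ for every $n$. For a real sequence $(a_n)$, $I\text{-}\lim a_n=L$ means $\{n:|a_n-L|\ge\varepsilon\}\in I$ for all $\varepsilon>0$. For $A\subset\mathbb{N}$, $d_I(A)=I\text{-}\lim_{n\to\infty}\frac1n|\{k\le n:k\in A\}|$ when this $I$-limit exists; ''$d_I(A)\ne0$'' means it is not the case that $d_I(A)$ exists and equals $0$. A point $\lambda\in X$ is an $I$-statistical cluster point of $x$ if for every $\varepsilon>0$, $d_I(\{k:\|x_k-\lambda\|<\varepsilon\})\ne0$; $\Lambda_x^S(I)$ is the set of these points. For $r\ge0$, $x$ is $r$-$I$-statistically convergent to $\xi$ if for every $\varepsilon>0$ and $\delta>0$, $\{n\in\mathbb{N}:\frac1n|\{k\le n:\|x_k-\xi\|\ge r+\varepsilon\}|\ge\delta\}\in I$; $I\text{-}st\text{-}\mathrm{LIM}_x^r$ is the set of all such $\xi$. *)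

From HB Require Import structures.
From mathcomp Require Import all_boot all_order all_algebra.
From mathcomp Require Import all_classical all_reals all_analysis.
Set Implicit Arguments. Unset Strict Implicit. Unset Printing Implicit Defensive.
Import Order.TTheory GRing.Theory Num.Theory.
Import numFieldNormedType.Exports.
Local Open Scope classical_set_scope.
Local Open Scope ring_scope.

(* Convention: the paper's N = {1,2,3,...} is represented by Rocq's nat via
   the shift n |-> n.+1, i.e. Rocq index k stands for the paper's k+1.
   Families of subsets of N are thus families of subsets of nat. *)

Definition is_ideal (I : set (set nat)) : Prop :=
  [/\ I set0,
      (forall A B, I A -> I B -> I (A `|` B)) &
      (forall A B, B `<=` A -> I A -> I B)].

Definition nontrivial_ideal (I : set (set nat)) : Prop := ~ I setT.

Definition admissible_ideal (I : set (set nat)) : Prop :=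
  forall n : nat, I [set n].

Definition Ilim {R : realType} (I : set (set nat)) (a : nat -> R) (L : R) : Prop :=
  forall eps : R, 0 < eps -> I [set n | eps <= `|a n - L|].

(* (1/n) |{k <= n : k in A}|, for the paper's index n = (Rocq n).+1 *)
Definition dens_ratio {R : realType} (A : set nat) (n : nat) : R :=
  (\sum_(k < n.+1) (if `[< A k >] then 1 else 0 : R)) / n.+1%:R.

(* "d_I(A) != 0": it is not the case that d_I(A) exists and equals 0 *)
Definition dI_ne0 {R : realType} (I : set (set nat)) (A : set nat) : Prop :=
  ~ Ilim I (@dens_ratio R A) 0.

Definition Istat_cluster_points {R : realType} {X : normedModType R}
  (I : set (set nat)) (x : nat -> X) : set X :=
  [set lam | forall eps : R, 0 < eps -> dI_ne0 (R := R) I [set k | `|x k - lam| < eps]].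

Definition Ist_LIM {R : realType} {X : normedModType R}
  (I : set (set nat)) (x : nat -> X) (r : R) : set X :=
  [set xi | forall eps delta : R, 0 < eps -> 0 < delta ->
     I [set n | delta <= dens_ratio (R := R) [set k | r + eps <= `|x k - xi|] n]].

From HB Require Import structures.
From mathcomp Require Import all_boot all_order all_algebra.
From mathcomp Require Import all_classical all_reals all_analysis.
From mathcomp Require Import lra.
Import Order.TTheory GRing.Theory Num.Theory.
Import numFieldNormedType.Exports.
Local Open Scope classical_set_scope.
Local Open Scope ring_scope.

(* If ||xi - c|| > r, put e = (||xi - c|| - r) / 2. By the triangle inequality
   every k with ||x_k - c|| < e has ||x_k - xi|| >= r + e, so the e-ball
   around c has density at most that of {k : ||x_k - xi|| >= r + e}, which
   I-converges to 0 because xi is an r-I-statistical limit of x. Hence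
   d_I of that ball is 0, and c is no I-statistical cluster point. *)

Section DensRatio.
Context {R : realType}.

Lemma dens_ratio_ge0 (A : set nat) n : 0 <= dens_ratio (R := R) A n.
Proof. by rewrite divr_ge0 //; apply: sumr_ge0 => k _; case: ifP. Qed.

Lemma le_dens_ratio (A B : set nat) n : A `<=` B ->
  dens_ratio (R := R) A n <= dens_ratio (R := R) B n.
Proof.
move=> AB; rewrite /dens_ratio ler_pM2r ?invr_gt0 ?ltr0n //.
apply: ler_sum => k _.
by case: (asboolP (A k)) => [/AB Bk|_]; case: asboolP.
Qed.

Lemma Ilim_dens_ratio0P (I : set (set nat)) (A : set nat) :
  Ilim I (@dens_ratio R A) 0 <->
  (forall delta : R, 0 < delta -> I [set n | delta <= dens_ratio A n]).
Proof.
have norm_dens delta : [set n | delta <= `|dens_ratio (R := R) A n - 0|] =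
                        [set n | delta <= dens_ratio A n].
  by apply/funext => n /=; rewrite subr0 ger0_norm ?dens_ratio_ge0.
by split=> lim0 delta /lim0; rewrite norm_dens.
Qed.

Lemma Ilim_dens_ratio0_subset {I : set (set nat)} {A B : set nat} :
  (forall U V, V `<=` U -> I U -> I V) -> A `<=` B ->
  Ilim I (@dens_ratio R B) 0 -> Ilim I (@dens_ratio R A) 0.
Proof.
move=> Isub AB /Ilim_dens_ratio0P limB; apply/Ilim_dens_ratio0P => delta /limB.
by apply: Isub => n /= /le_trans; apply; apply: le_dens_ratio.
Qed.

End DensRatio.

Lemma Ist_LIM_far_dens0 {R : realType} {X : normedModType R}
    {I : set (set nat)} {x : nat -> X} {r eps : R} {xi : X} :
  xi \in Ist_LIM I x r -> 0 < eps ->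
  Ilim I (@dens_ratio R [set k | r + eps <= `|x k - xi|]) 0.
Proof.
by rewrite inE => lim_xi eps0; apply/Ilim_dens_ratio0P => delta; exact: lim_xi.
Qed.

Lemma ball_sub_far {R : realDomainType} {V : normedZmodType R} {c xi : V} {r e : R} :
  `|xi - c| = r + e + e ->
  [set y | `|y - c| < e] `<=` [set y | r + e <= `|y - xi|].
Proof.
move=> dist_xi_c y /= lt_yc.
have := ler_distD y xi c; rewrite dist_xi_c [`|xi - y|]distrC.
by move: lt_yc => /ltW; lra.
Qed.

Theorem theorem3p6 (R : realType) (X : normedModType R) (I : set (set nat))
  (r : R) (x : nat -> X) (c : X) :
  is_ideal I -> nontrivial_ideal I -> admissible_ideal I ->
  0 <= r ->
  c \in Istat_cluster_points I x ->
  forall xi : X, xi \in Ist_LIM I x r -> `|xi - c| <= r.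
Proof.
move=> [_ _ Isub] _ _ _; rewrite inE => c_cluster xi xi_lim.
rewrite leNgt; apply/negP => lt_r_dist.
pose e := (`|xi - c| - r) / 2.
have e_gt0 : 0 < e by rewrite divr_gt0 // subr_gt0.
have dist_eq : `|xi - c| = r + e + e by rewrite /e; lra.
apply: (c_cluster e e_gt0).
apply: (Ilim_dens_ratio0_subset Isub _ (Ist_LIM_far_dens0 xi_lim e_gt0)).
by move=> k; exact: (ball_sub_far dist_eq (x k)).
Qed.
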